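(* Fix a partition $\Delta=\{x_0<\dots<x_N\}$ of $[-\pi,\pi]$ and a scale vector $\alpha\in(-1,1)^N$. For $n\in\mathbb{N}$ let $\mathfrak{R}^\alpha_{\Delta,B_n}(2\pi)=\mathcal{F}^\alpha_{\Delta,B_n}(\mathfrak{R}(2\pi))$. Then $\bigcup_{n\in\mathbb{N}}\mathfrak{R}^\alpha_{\Delta,B_n}(2\pi)$ is dense in $\mathcal{C}(2\pi)$ (with respect to the sup norm).
   Context: Let $I=[x_0,x_N]=[-\pi,\pi]$, $N\ge2$, $\Delta=\{x_0<x_1<\dots<x_N\}$, $I_i=[x_{i-1},x_i]$, and $L_i(x)=a_ix+b_i$ the affine map of $I$ onto $I_i$ with $L_i(x_0)=x_{i-1}$, $L_i(x_N)=x_i$. For $f,b\in\mathcal{C}(I)$ with $b(x_0)=f(x_0)$, $b(x_N)=f(x_N)$ and $\alpha\in(-1,1)^N$, $f^\alpha_{\Delta,b}$ is the unique $g\in\mathcal{C}(I)$ with $g(x)=f(x)+\alpha_i(g-b)(L_i^{-1}(x))$ for $x\in I_i$, $i=1,\dots,N$. For a bounded linear $L$ with $(Lf)(x_0)=f(x_0)$, $(Lf)(x_N)=f(x_N)$, $\mathcal{F}^\alpha_{\Delta,L}(f)=f^\alpha_{\Delta,Lf}$. $B_n$ is the Bernstein operator on $I$: $B_nf(x)=\sum_{k=0}^n f\big(x_0+\tfrac{k}{n}(x_N-x_0)\big)\binom{n}{k}\frac{(x-x_0)^k(x_N-x)^{n-k}}{(x_N-x_0)^n}$. $\mathcal{C}(2\pi)=\{f\in\mathcal{C}([-\pi,\pi]):f(-\pi)=f(\pi)\}$,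 $\mathfrak{T}_m$ = real trigonometric polynomials of degree $\le m$, $\mathfrak{R}(2\pi)=\bigcup_{m,n}\{p/q:p\in\mathfrak{T}_m,q\in\mathfrak{T}_n,q>0\text{ on }[-\pi,\pi]\}$. *)

From Stdlib Require Import Reals Lra Lia.
Open Scope R_scope.

Definition inI (x : R) : Prop := - PI <= x <= PI.

Definition contI (f : R -> R) : Prop :=
  forall x, inI x -> forall eps, 0 < eps ->
    exists delta, 0 < delta /\
      forall y, inI y -> Rabs (y - x) < delta -> Rabs (f y - f x) < eps.

Definition C2pi (f : R -> R) : Prop := contI f /\ f (- PI) = f PI.

Definition trig_poly (m : nat) (p : R -> R) : Prop :=
  exists a b : nat -> R,
    forall x, p x = a 0%nat +
      (match m with
       | 0%nat => 0
       | S m' => sum_f_R0 (fun j => a (S j) * cos (INR (S j) * x)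
                                  + b (S j) * sin (INR (S j) * x)) m'
       end).

(* R(2pi): quotients p/q of trig polynomials with q > 0 on I;
   only the values on I matter *)
Definition trig_rational (r : R -> R) : Prop :=
  exists (m n : nat) (p q : R -> R),
    trig_poly m p /\ trig_poly n q /\
    (forall x, inI x -> 0 < q x) /\
    (forall x, inI x -> r x = p x / q x).

Definition partition (N : nat) (xs : nat -> R) : Prop :=
  (2 <= N)%nat /\ xs 0%nat = - PI /\ xs N = PI /\
  (forall i, (i < N)%nat -> xs i < xs (S i)).

Definition scale_vector (N : nat) (alpha : nat -> R) : Prop :=
  forall i, (1 <= i <= N)%nat -> -1 < alpha i < 1.

(* L_i^{-1} : I_i -> I, inverse of the affine map L_i with
   L_i(x_0) = x_{i-1}, L_i(x_N) = x_i *)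
Definition Linv (N : nat) (xs : nat -> R) (i : nat) (y : R) : R :=
  xs 0%nat + (xs N - xs 0%nat) * (y - xs (pred i)) / (xs i - xs (pred i)).

(* g is the alpha-fractal function f^alpha_{Delta,b} (it is unique) *)
Definition is_fractal (N : nat) (xs alpha : nat -> R) (f b g : R -> R) : Prop :=
  contI g /\
  forall i, (1 <= i <= N)%nat ->
    forall y, xs (pred i) <= y <= xs i ->
      g y = f y + alpha i * (g (Linv N xs i y) - b (Linv N xs i y)).

Definition bernstein (n : nat) (f : R -> R) (x : R) : R :=
  sum_f_R0 (fun k =>
      f (- PI + INR k / INR n * (PI - - PI)) * Binomial.C n k
      * (x - - PI) ^ k * (PI - x) ^ (n - k) / (PI - - PI) ^ n) n.

Definition in_fractal_rational (N : nat) (xs alpha : nat -> R) (n : nat)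
  (h : R -> R) : Prop :=
  exists r, trig_rational r /\ is_fractal N xs alpha r (bernstein n r) h.

(* Given f in C(2pi) and eps > 0 the proof builds the approximant in three
   independent stages, each developed below as a self-contained theory.
   1. Trigonometric rational approximation: f is uniformly within eps/2 of a
      quotient r = P/Q of trigonometric polynomials, where
      Q(x) = sum_j K(t_j, x), P(x) = sum_j f(t_j) K(t_j, x) and
      K(t, x) = ((1 + cos (x - t))/2)^p is a peaked positive kernel sampled
      at equispaced nodes t_j; periodicity of f handles nodes near -pi/pi.
   2. Bernstein approximation: B_n r -> r uniformly (second-moment estimate),
      and B_n r interpolates r at both ends of I.
   3. Fractal perturbation: for a continuous D vanishing at the ends of I,
      the equation E = alpha_i (E + D) o L_i^{-1} on I_i has a continuous
      solution with |E| <= a sup|D| / (1 - a), a = max |alpha_i|; it is the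
      uniform limit of the Picard iterates of this contraction.
   With D = r - B_n r, the function r + E is the fractal function
   r^alpha_{Delta, B_n r}, and it lies within eps of f. *)

From Stdlib Require Import Reals Lra Lia.
Open Scope R_scope.

Ltac destruct_minmax :=
  unfold Rmax, Rmin, Rabs in *;
  repeat match goal with
  | |- context [Rle_dec ?a ?b] => destruct (Rle_dec a b)
  | H : context [Rle_dec ?a ?b] |- _ => destruct (Rle_dec a b)
  | |- context [Rcase_abs ?a] => destruct (Rcase_abs a)
  | H : context [Rcase_abs ?a] |- _ => destruct (Rcase_abs a)
  end.

Lemma Rdiv_le_0_compat a b : 0 <= a -> 0 < b -> 0 <= a / b.
Proof. intros. apply Rmult_le_pos; [|apply Rlt_le, Rinv_0_lt_compat]; auto. Qed.

Lemma Rabs_lt_between x y d : Rabs (x - y) < d <-> y - d < x < y + d.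
Proof. unfold Rabs; destruct Rcase_abs; split; intros; lra. Qed.

Lemma geometric_small a : 0 <= a < 1 -> forall e, 0 < e -> exists k, a ^ k < e.
Proof.
  intros Ha e He. destruct (pow_lt_1_zero a ltac:(rewrite Rabs_pos_eq; lra) e He) as [k Hk].
  exists k. specialize (Hk k (le_n k)). rewrite Rabs_pos_eq in Hk by (apply pow_le; lra). auto.
Qed.

(** * Continuous functions on I *)

(* Projection of R onto I; it transports facts about functions continuous on
   R (Heine, extreme values) to functions only continuous on I. *)
Definition clamp (x : R) : R := Rmax (- PI) (Rmin x PI).

Lemma clamp_inI x : inI (clamp x).
Proof. unfold clamp, inI. pose proof PI_RGT_0. destruct_minmax; lra. Qed.

Lemma clamp_id x : inI x -> clamp x = x.
Proof. unfold clamp, inI; intros. destruct_minmax; lra. Qed.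

Lemma clamp_nonexpansive x y : Rabs (clamp x - clamp y) <= Rabs (x - y).
Proof. unfold clamp. pose proof PI_RGT_0. destruct_minmax; lra. Qed.

Lemma contI_clamp_continuous f : contI f -> continuity (fun y => f (clamp y)).
Proof.
  intros Hf x eps Heps. destruct (Hf (clamp x) (clamp_inI x) eps Heps) as [d [Hd H]].
  exists d; split; [lra|]. intros y [_ Hy]. simpl in *. unfold R_dist in *.
  apply H; [apply clamp_inI|]. pose proof (clamp_nonexpansive y x). lra.
Qed.

Lemma continuity_pt_contI f : (forall x, inI x -> continuity_pt f x) -> contI f.
Proof.
  intros Hf x Hx eps Heps. destruct (Hf x Hx eps Heps) as [d [Hd H]].
  exists d; split; [lra|]. intros y _ Hy.
  destruct (Req_dec y x) as [->|Hne]; [rewrite Rminus_diag, Rabs_R0; lra|].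
  apply (H y). split; [split; [exact I|auto]|exact Hy].
Qed.

Lemma contI_ext f g : contI f -> (forall x, inI x -> f x = g x) -> contI g.
Proof.
  intros Hf E x Hx eps He. destruct (Hf x Hx eps He) as [d [Hd H]].
  exists d; split; auto. intros y Hy Hxy. rewrite <- !E by auto. auto.
Qed.

Lemma contI_scal c f : contI f -> contI (fun x => c * f x).
Proof.
  intros Hf x Hx eps He.
  destruct (Hf x Hx (eps / (Rabs c + 1))) as [d [Hd H]].
  { apply Rdiv_lt_0_compat; [lra|]. pose proof (Rabs_pos c); lra. }
  exists d; split; auto. intros y Hy Hxy.
  rewrite <- Rmult_minus_distr_l, Rabs_mult. specialize (H y Hy Hxy).
  pose proof (Rabs_pos c). pose proof (Rabs_pos (f y - f x)).
  apply Rle_lt_trans with ((Rabs c + 1) * Rabs (f y - f x)); [nra|].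
  apply (Rmult_lt_compat_l (Rabs c + 1)) in H; [|lra].
  replace ((Rabs c + 1) * (eps / (Rabs c + 1))) with eps in H by (field; lra). exact H.
Qed.

Lemma contI_plus f g : contI f -> contI g -> contI (fun x => f x + g x).
Proof.
  intros Hf Hg w Hw e He.
  destruct (Hf w Hw (e/2) ltac:(lra)) as [d1 [Hd1 H1]].
  destruct (Hg w Hw (e/2) ltac:(lra)) as [d2 [Hd2 H2]].
  exists (Rmin d1 d2). split; [apply Rmin_pos; lra|]. intros z Hz Hzw.
  pose proof (Rmin_l d1 d2). pose proof (Rmin_r d1 d2).
  specialize (H1 z Hz ltac:(lra)). specialize (H2 z Hz ltac:(lra)).
  replace (f z + g z - (f w + g w)) with ((f z - f w) + (g z - g w)) by ring.
  pose proof (Rabs_triang (f z - f w) (g z - g w)). lra.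
Qed.

Lemma contI_minus f g : contI f -> contI g -> contI (fun x => f x - g x).
Proof.
  intros Hf Hg. apply (contI_ext (fun x => f x + -1 * g x)); [|intros; ring].
  apply contI_plus; [|apply contI_scal]; auto.
Qed.

Lemma contI_uniform f : contI f -> forall eps, 0 < eps -> exists d, 0 < d /\
  forall x y, inI x -> inI y -> Rabs (x - y) < d -> Rabs (f x - f y) < eps.
Proof.
  intros Hf eps He.
  destruct (Heine (fun y => f (clamp y)) (fun c => -PI <= c <= PI) (compact_P3 _ _)
     (fun x _ => contI_clamp_continuous f Hf x) (mkposreal eps He)) as [[d Hd] H].
  exists d; split; auto. intros x y Hx Hy Hxy.
  specialize (H x y Hx Hy Hxy). simpl in H. rewrite !clamp_id in H; auto.
Qed.

Lemma contI_bounded f : contI f -> exists M, 0 <= M /\ forall x, inI x -> Rabs (f x) <= M.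
Proof.
  intros Hf. pose proof PI_RGT_0. pose proof (contI_clamp_continuous f Hf) as Hc.
  destruct (continuity_ab_maj (fun y => f (clamp y)) (-PI) PI ltac:(lra)
     (fun c _ => Hc c)) as [M1 [H1 _]].
  destruct (continuity_ab_maj (fun y => - f (clamp y)) (-PI) PI ltac:(lra)
     (fun c _ => continuity_pt_opp _ _ (Hc c))) as [M2 [H2 _]].
  exists (Rabs (f (clamp M1)) + Rabs (f (clamp M2))).
  split; [pose proof (Rabs_pos (f (clamp M1))); pose proof (Rabs_pos (f (clamp M2))); lra|].
  intros x Hx. specialize (H1 x Hx); specialize (H2 x Hx).
  rewrite clamp_id in H1, H2 by auto. destruct_minmax; lra.
Qed.

(** * Trigonometric polynomials *)

(* It is easier to work with than
   the coefficient form [trig_poly], to which it is shown equivalent. *)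
Inductive trig_span : (R -> R) -> Prop :=
| trig_cos : forall c k, trig_span (fun x => c * cos (INR k * x))
| trig_sin : forall c k, trig_span (fun x => c * sin (INR k * x))
| trig_add : forall f g, trig_span f -> trig_span g -> trig_span (fun x => f x + g x)
| trig_ext : forall f g, trig_span f -> (forall x, f x = g x) -> trig_span g.

Lemma trig_const c : trig_span (fun _ => c).
Proof.
  apply (trig_ext _ _ (trig_cos c 0)). intros; simpl. rewrite Rmult_0_l, cos_0; ring.
Qed.

Lemma trig_scal c f : trig_span f -> trig_span (fun x => c * f x).
Proof.
  induction 1.
  - apply (trig_ext _ _ (trig_cos (c * c0) k)); intros; ring.
  - apply (trig_ext _ _ (trig_sin (c * c0) k)); intros; ring.
  - apply (trig_ext _ _ (trig_add _ _ IHtrig_span1 IHtrig_span2)); intros; simpl; ring.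
  - apply (trig_ext _ _ IHtrig_span); intros; simpl; rewrite H0; ring.
Qed.

Lemma trig_sum (c : nat -> R) (g : nat -> R -> R) m :
  (forall j, trig_span (g j)) -> trig_span (fun x => sum_f_R0 (fun j => c j * g j x) m).
Proof.
  intros H. induction m as [|m IH]; [apply trig_scal; auto|].
  apply (trig_ext _ _ (trig_add _ _ IH (trig_scal (c (S m)) _ (H (S m))))). intros; simpl; auto.
Qed.

(* Product-to-sum formulas: they make the span an algebra. *)
Lemma cos_cos_sum a b : cos a * cos b = (cos (a + b) + cos (a - b)) / 2.
Proof. rewrite cos_plus, cos_minus; field. Qed.
Lemma sin_cos_sum a b : sin a * cos b = (sin (a + b) + sin (a - b)) / 2.
Proof. rewrite sin_plus, sin_minus; field. Qed.
Lemma cos_sin_sum a b : cos a * sin b = (sin (a + b) - sin (a - b)) / 2.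
Proof. rewrite sin_plus, sin_minus; field. Qed.
Lemma sin_sin_sum a b : sin a * sin b = (cos (a - b) - cos (a + b)) / 2.
Proof. rewrite cos_plus, cos_minus; field. Qed.

Lemma INR_succ_mult_plus k x : INR k * x + x = INR (S k) * x.
Proof. rewrite S_INR; ring. Qed.
Lemma INR_succ_mult_minus k x : INR (S k) * x - x = INR k * x.
Proof. rewrite S_INR; ring. Qed.

Lemma trig_mul_cos f : trig_span f -> trig_span (fun x => f x * cos x).
Proof.
  induction 1.
  - destruct k as [|k].
    + apply (trig_ext _ _ (trig_cos c 1)); intros; simpl.
      rewrite Rmult_0_l, cos_0, Rmult_1_l; ring.
    + apply (trig_ext _ _ (trig_add _ _ (trig_cos (c/2) (S (S k))) (trig_cos (c/2) k))).
      intros x. rewrite Rmult_assoc, cos_cos_sum, INR_succ_mult_plus, INR_succ_mult_minus. field.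
  - destruct k as [|k].
    + apply (trig_ext _ _ (trig_const 0)); intros; simpl. rewrite Rmult_0_l, sin_0; ring.
    + apply (trig_ext _ _ (trig_add _ _ (trig_sin (c/2) (S (S k))) (trig_sin (c/2) k))).
      intros x. rewrite Rmult_assoc, sin_cos_sum, INR_succ_mult_plus, INR_succ_mult_minus. field.
  - apply (trig_ext _ _ (trig_add _ _ IHtrig_span1 IHtrig_span2)); intros; simpl; ring.
  - apply (trig_ext _ _ IHtrig_span); intros; simpl; rewrite H0; ring.
Qed.

Lemma trig_mul_sin f : trig_span f -> trig_span (fun x => f x * sin x).
Proof.
  induction 1.
  - destruct k as [|k].
    + apply (trig_ext _ _ (trig_sin c 1)); intros; simpl.
      rewrite Rmult_0_l, cos_0, Rmult_1_l; ring.
    + apply (trig_ext _ _ (trig_add _ _ (trig_sin (c/2) (S (S k))) (trig_sin (-c/2) k))).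
      intros x. rewrite Rmult_assoc, cos_sin_sum, INR_succ_mult_plus, INR_succ_mult_minus. field.
  - destruct k as [|k].
    + apply (trig_ext _ _ (trig_const 0)); intros; simpl. rewrite Rmult_0_l, sin_0; ring.
    + apply (trig_ext _ _ (trig_add _ _ (trig_cos (-c/2) (S (S k))) (trig_cos (c/2) k))).
      intros x. rewrite Rmult_assoc, sin_sin_sum, INR_succ_mult_plus, INR_succ_mult_minus. field.
  - apply (trig_ext _ _ (trig_add _ _ IHtrig_span1 IHtrig_span2)); intros; simpl; ring.
  - apply (trig_ext _ _ IHtrig_span); intros; simpl; rewrite H0; ring.
Qed.

Lemma trig_continuous f : trig_span f -> continuity f.
Proof.
  assert (Hlin : forall k, continuity (fun x => INR k * x)).
  { intros k. apply continuity_mult; [apply continuity_const; intros ? ?; auto|].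
    apply derivable_continuous, derivable_id. }
  induction 1.
  - apply continuity_mult; [apply continuity_const; intros ? ?; auto|].
    apply (continuity_comp (fun x => INR k * x) cos); [apply Hlin|apply continuity_cos].
  - apply continuity_mult; [apply continuity_const; intros ? ?; auto|].
    apply (continuity_comp (fun x => INR k * x) sin); [apply Hlin|apply continuity_sin].
  - apply continuity_plus; auto.
  - intros x. apply (continuity_pt_locally_ext f g 1 x); auto; lra.
Qed.

Definition fourier_sum (a b : nat -> R) (m : nat) (x : R) : R :=
  sum_f_R0 (fun j => a j * cos (INR j * x) + b j * sin (INR j * x)) m.

Definition fourier_repr (f : R -> R) : Prop :=
  exists m a b, (forall j, (m < j)%nat -> a j = 0 /\ b j = 0) /\
    forall x, f x = fourier_sum a b m x.

Lemma fourier_sum_pad a b m M x : (forall j, (m < j)%nat -> a j = 0 /\ b j = 0) ->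
  (m <= M)%nat -> fourier_sum a b M x = fourier_sum a b m x.
Proof.
  intros Hz HM. induction HM; auto. unfold fourier_sum in *. rewrite tech5, IHHM.
  destruct (Hz (S m0)) as [-> ->]; [lia|]. ring.
Qed.

Lemma sum_indicator (F : nat -> R) k :
  sum_f_R0 (fun j => if Nat.eqb j k then F j else 0) k = F k.
Proof.
  destruct k as [|k]; simpl; auto.
  rewrite sum_eq_R0; [rewrite Nat.eqb_refl; ring|].
  intros n Hn. destruct (Nat.eqb_spec n (S k)); [lia|auto].
Qed.

Lemma trig_fourier_repr f : trig_span f -> fourier_repr f.
Proof.
  assert (Hind : forall c k, (forall j, (k < j)%nat -> (if Nat.eqb j k then c else 0) = 0)).
  { intros c k j Hj. destruct (Nat.eqb_spec j k); [lia|auto]. }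
  induction 1.
  - exists k, (fun j => if Nat.eqb j k then c else 0), (fun _ => 0).
    split; [intros j Hj; split; auto|].
    intros x. unfold fourier_sum. rewrite <- (sum_indicator (fun j => c * cos (INR j * x)) k).
    apply sum_eq. intros i _. destruct (Nat.eqb i k); ring.
  - exists k, (fun _ => 0), (fun j => if Nat.eqb j k then c else 0).
    split; [intros j Hj; split; auto|].
    intros x. unfold fourier_sum. rewrite <- (sum_indicator (fun j => c * sin (INR j * x)) k).
    apply sum_eq. intros i _. destruct (Nat.eqb i k); ring.
  - destruct IHtrig_span1 as [m1 [a1 [b1 [Z1 E1]]]].
    destruct IHtrig_span2 as [m2 [a2 [b2 [Z2 E2]]]].
    exists (max m1 m2), (fun j => a1 j + a2 j), (fun j => b1 j + b2 j). split.
    + intros j Hj. destruct (Z1 j) as [-> ->]; [lia|]. destruct (Z2 j) as [-> ->]; [lia|]. lra.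
    + intros x. rewrite E1, E2, <- (fourier_sum_pad a1 b1 m1 (max m1 m2)),
        <- (fourier_sum_pad a2 b2 m2 (max m1 m2)) by (auto; lia).
      unfold fourier_sum. rewrite <- sum_plus. apply sum_eq. intros; ring.
  - destruct IHtrig_span as [m [a [b [Z E]]]]. exists m, a, b.
    split; auto. intros; rewrite <- H0; auto.
Qed.

Lemma trig_span_poly f : trig_span f -> exists m, trig_poly m f.
Proof.
  intros Hf. destruct (trig_fourier_repr f Hf) as [m [a [b [_ E]]]].
  exists m, a, b. intros x. rewrite E. unfold fourier_sum.
  destruct m as [|m].
  - simpl. rewrite Rmult_0_l, cos_0, sin_0. ring.
  - rewrite decomp_sum by lia. simpl pred. simpl INR at 1 2.
    rewrite Rmult_0_l, cos_0, sin_0. replace (a 0%nat * 1 + b 0%nat * 0) with (a 0%nat) by ring.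
    reflexivity.
Qed.

Lemma trig_poly_span m p : trig_poly m p -> trig_span p.
Proof.
  intros [a [b H]].
  assert (Htail : forall m, trig_span (fun x => sum_f_R0
      (fun j => a (S j) * cos (INR (S j) * x) + b (S j) * sin (INR (S j) * x)) m)).
  { induction m0 as [|m0 IH].
    - apply (trig_ext _ _ (trig_add _ _ (trig_cos (a 1%nat) 1) (trig_sin (b 1%nat) 1))); auto.
    - apply (trig_ext _ _ (trig_add _ _ IH (trig_add _ _ (trig_cos (a (S (S m0))) (S (S m0)))
                                              (trig_sin (b (S (S m0))) (S (S m0)))))); auto. }
  destruct m as [|m].
  - apply (trig_ext _ _ (trig_const (a 0%nat))). intros; rewrite H; ring.
  - apply (trig_ext _ _ (trig_add _ _ (trig_const (a 0%nat)) (Htail m))). intros; rewrite H; auto.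
Qed.

Lemma trig_rational_contI r : trig_rational r -> contI r.
Proof.
  intros [m [n [p [q [Hp [Hq [Hpos Hr]]]]]]].
  apply (contI_ext (fun x => p x / q x)); [|intros; symmetry; auto].
  apply continuity_pt_contI. intros x Hx. apply continuity_pt_div.
  - apply (trig_continuous _ (trig_poly_span _ _ Hp)).
  - apply (trig_continuous _ (trig_poly_span _ _ Hq)).
  - specialize (Hpos x Hx). lra.
Qed.

(** * Approximation of C(2pi) by trigonometric rational functions *)

Lemma cos_Rabs d : cos (Rabs d) = cos d.
Proof. unfold Rabs; destruct Rcase_abs; auto; apply cos_neg. Qed.

Lemma cos_gt_near_period d dl : 0 < dl < PI -> -(2*PI) <= d <= 2*PI -> cos dl < cos d ->
  Rabs d < dl \/ d > 2*PI - dl \/ d < -(2*PI - dl).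
Proof.
  intros Hdl Hd Hc. rewrite <- (cos_Rabs d) in Hc.
  assert (Hsign : (0 <= d /\ Rabs d = d) \/ (d < 0 /\ Rabs d = - d))
    by (unfold Rabs; destruct Rcase_abs; [right|left]; split; lra).
  assert (He : 0 <= Rabs d <= 2*PI) by (destruct Hsign as [[? ?]|[? ?]]; lra).
  remember (Rabs d) as e eqn:Hee.
  destruct (Rlt_le_dec e dl); [left; auto|].
  destruct (Rle_lt_dec e PI).
  - exfalso. assert (cos e <= cos dl) by (apply cos_decr_1; lra). lra.
  - assert (Hc' : cos (2*PI - e) = cos e) by (rewrite cos_minus, cos_2PI, sin_2PI; ring).
    destruct (Rlt_le_dec (2*PI - e) dl).
    + right. destruct Hsign as [[? ?]|[? ?]]; [left|right]; lra.
    + exfalso. assert (cos (2*PI - e) <= cos dl) by (apply cos_decr_1; lra). lra.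
Qed.

(* Uniform continuity of a periodic f, measured by cos (x - t): the distance
   on the circle, which identifies -pi with pi. *)
Lemma C2pi_uniform_circle f : C2pi f -> forall eps, 0 < eps -> exists dl, 0 < dl < PI /\
  forall x t, inI x -> inI t -> cos dl < cos (x - t) -> Rabs (f t - f x) < eps.
Proof.
  intros [Hf Hper] eps He. pose proof PI_RGT_0.
  destruct (contI_uniform f Hf (eps/2)) as [d0 [Hd0 U]]; [lra|].
  set (dl := Rmin d0 (PI/2)).
  assert (Hdl : 0 < dl <= d0 /\ dl <= PI/2)
    by (unfold dl; pose proof (Rmin_l d0 (PI/2)); pose proof (Rmin_r d0 (PI/2));
        pose proof (Rmin_pos d0 (PI/2) Hd0 ltac:(lra)); lra).
  exists dl. split; [lra|]. intros x t Hx Ht Hc.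
  assert (Hclose : forall u v, inI u -> inI v -> Rabs (u - v) < dl -> Rabs (f u - f v) < eps/2)
    by (intros; apply U; auto; lra).
  unfold inI in *.
  destruct (cos_gt_near_period (x - t) dl) as [H1|[H1|H1]]; try lra.
  - rewrite Rabs_minus_sym. apply Rlt_trans with (eps/2); [|lra]. apply Hclose; auto.
  - assert (A1 : Rabs (f x - f PI) < eps/2)
      by (apply Hclose; unfold inI; try lra; destruct_minmax; lra).
    assert (A2 : Rabs (f t - f (-PI)) < eps/2)
      by (apply Hclose; unfold inI; try lra; destruct_minmax; lra).
    rewrite Hper in A2. destruct_minmax; lra.
  - assert (A1 : Rabs (f t - f PI) < eps/2)
      by (apply Hclose; unfold inI; try lra; destruct_minmax; lra).
    assert (A2 : Rabs (f x - f (-PI)) < eps/2)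
      by (apply Hclose; unfold inI; try lra; destruct_minmax; lra).
    rewrite Hper in A2. destruct_minmax; lra.
Qed.

(* The peaked kernel ((1 + cos (x - t))/2)^p, a trigonometric polynomial in x
   with values in [0, 1], maximal at x = t. *)
Definition kernel (p : nat) (t x : R) : R := ((1 + cos (x - t)) / 2) ^ p.

Lemma kernel_trig p t : trig_span (kernel p t).
Proof.
  induction p as [|p IH].
  - apply (trig_ext _ _ (trig_const 1)); intros; unfold kernel; simpl; auto.
  - apply (trig_ext _ _ (trig_add _ _ (trig_scal (1/2) _ IH)
             (trig_add _ _ (trig_scal (cos t / 2) _ (trig_mul_cos _ IH))
                           (trig_scal (sin t / 2) _ (trig_mul_sin _ IH))))).
    intros x. unfold kernel. simpl. rewrite cos_minus. field.
Qed.

Lemma kernel_nonneg p t x : 0 <= kernel p t x.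
Proof. unfold kernel. apply pow_le. pose proof (COS_bound (x - t)). lra. Qed.

Lemma equispaced_cover (h : R) (m : nat) : 0 < h -> forall y, 0 <= y <= INR m * h ->
  exists j, (j <= m)%nat /\ Rabs (y - INR j * h) <= h.
Proof.
  intros Hh. induction m as [|m IH]; intros y Hy.
  - exists 0%nat. split; auto. simpl in *. replace y with 0 by lra.
    rewrite Rmult_0_l, Rminus_0_r, Rabs_R0; lra.
  - destruct (Rle_dec y (INR m * h)) as [Hle|Hgt].
    + destruct (IH y) as [j [Hj H]]; [lra|]. exists j; split; [lia|auto].
    + exists (S m); split; auto. rewrite S_INR in *. destruct_minmax; lra.
Qed.

Lemma term_le_sum (F : nat -> R) m j : (forall i, 0 <= F i) -> (j <= m)%nat ->
  F j <= sum_f_R0 F m.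
Proof.
  intros H Hj. induction m.
  - replace j with 0%nat by lia. simpl. lra.
  - simpl. destruct (Nat.eq_dec j (S m)) as [->|Hne].
    + assert (0 <= sum_f_R0 F m) by (apply cond_pos_sum; auto). lra.
    + specialize (IHm ltac:(lia)). specialize (H (S m)). lra.
Qed.

(* Some node t_j = -pi + j h is h-close to x, so the kernel sum is bounded
   below by ((1 + cos h)/2)^p on all of I. *)
Lemma kernel_sum_lower_bound p m h x : 0 < h <= PI -> INR m * h = 2 * PI -> inI x ->
  ((1 + cos h) / 2) ^ p <= sum_f_R0 (fun j => kernel p (- PI + INR j * h) x) m.
Proof.
  intros Hh Hmh Hx. unfold inI in Hx.
  destruct (equispaced_cover h m (proj1 Hh) (x + PI)) as [j [Hj Hd]]; [lra|].
  apply Rle_trans with (kernel p (- PI + INR j * h) x);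
    [|apply (term_le_sum (fun j => kernel p (- PI + INR j * h) x)); auto using kernel_nonneg].
  unfold kernel. apply pow_incr. split; [pose proof (COS_bound h); lra|].
  replace (x - (- PI + INR j * h)) with (x + PI - INR j * h) by ring.
  rewrite <- (cos_Rabs (x + PI - INR j * h)).
  assert (cos h <= cos (Rabs (x + PI - INR j * h))); [|lra].
  apply cos_decr_1; auto using Rabs_pos; lra.
Qed.

Lemma sum_scal_l (F : nat -> R) c m : sum_f_R0 (fun k => c * F k) m = c * sum_f_R0 F m.
Proof. induction m; simpl; [ring|rewrite IHm; ring]. Qed.

Lemma weighted_mean_error (v w : nat -> R) v0 e c q m :
  0 < q -> 0 <= c -> (forall j, 0 <= w j) -> q <= sum_f_R0 w m ->
  (forall j, (j <= m)%nat -> Rabs (v j - v0) * w j <= e * w j + c) ->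
  Rabs (sum_f_R0 (fun j => v j * w j) m / sum_f_R0 w m - v0) <= e + INR (S m) * c / q.
Proof.
  intros Hq Hc Hw Htot Hdev. set (total := sum_f_R0 w m) in *.
  assert (Hdiff : sum_f_R0 (fun j => v j * w j) m / total - v0
                  = sum_f_R0 (fun j => (v j - v0) * w j) m / total).
  { assert (sum_f_R0 (fun j => (v j - v0) * w j) m = sum_f_R0 (fun j => v j * w j) m - v0 * total)
      by (unfold total; clear; induction m; simpl; [ring|rewrite IHm; ring]).
    rewrite H. field. lra. }
  assert (Hnum : Rabs (sum_f_R0 (fun j => (v j - v0) * w j) m) <= e * total + INR (S m) * c).
  { eapply Rle_trans; [apply sum_f_R0_triangle|].
    eapply Rle_trans; [apply sum_Rle|].
    { intros j Hj. rewrite Rabs_mult, (Rabs_pos_eq (w j)) by auto. exact (Hdev j Hj). }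
    rewrite sum_plus, sum_scal_l. apply Rplus_le_compat_l. right. clear.
    induction m; [simpl; ring|]. rewrite tech5, IHm, (S_INR (S m)). ring. }
  rewrite Hdiff. unfold Rdiv. rewrite Rabs_mult, Rabs_inv, (Rabs_pos_eq total) by lra.
  apply Rle_trans with ((e * total + INR (S m) * c) * / total).
  { apply Rmult_le_compat_r; [apply Rlt_le, Rinv_0_lt_compat; lra|exact Hnum]. }
  replace ((e * total + INR (S m) * c) * / total) with (e + INR (S m) * c * / total) by (field; lra).
  apply Rplus_le_compat_l, Rmult_le_compat_l; [pose proof (pos_INR (S m)); nra|].
  apply Rinv_le_contravar; lra.
Qed.

(* A single weighted deviation: near nodes use uniform continuity, far nodes
   use that the kernel is at most ((1 + cos dl)/2)^p there. *)
Lemma kernel_deviation f M dl e p x t : 0 <= e ->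
  (forall y, inI y -> Rabs (f y) <= M) -> inI x -> inI t ->
  (cos dl < cos (x - t) -> Rabs (f t - f x) < e) ->
  Rabs (f t - f x) * kernel p t x <= e * kernel p t x + 2 * M * ((1 + cos dl) / 2) ^ p.
Proof.
  intros He HM Hx Ht U. pose proof (kernel_nonneg p t x) as HK.
  pose proof (HM x Hx). pose proof (HM t Ht).
  assert (Hgap : Rabs (f t - f x) <= 2 * M) by (destruct_minmax; lra).
  assert (HB : 0 <= ((1 + cos dl) / 2) ^ p) by (apply pow_le; pose proof (COS_bound dl); lra).
  destruct (Rlt_dec (cos dl) (cos (x - t))) as [Hc|Hc].
  - specialize (U Hc). assert (0 <= 2 * M) by (pose proof (Rabs_pos (f x)); lra).
    assert (Rabs (f t - f x) * kernel p t x <= e * kernel p t x) by (apply Rmult_le_compat_r; lra).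
    nra.
  - assert (kernel p t x <= ((1 + cos dl) / 2) ^ p)
      by (unfold kernel; apply pow_incr; pose proof (COS_bound (x - t)); lra).
    assert (Rabs (f t - f x) * kernel p t x <= 2 * M * ((1 + cos dl) / 2) ^ p)
      by (apply Rmult_le_compat; auto using Rabs_pos).
    nra.
Qed.

Lemma nodes_inI m h j : 0 < h -> INR m * h = 2 * PI -> (j <= m)%nat -> inI (- PI + INR j * h).
Proof.
  intros Hh Hmh Hj. apply le_INR in Hj. unfold inI.
  pose proof (pos_INR j). split; nra.
Qed.

Definition kernel_numer (f : R -> R) (p : nat) (h : R) (m : nat) (x : R) : R :=
  sum_f_R0 (fun j => f (- PI + INR j * h) * kernel p (- PI + INR j * h) x) m.

Definition kernel_denom (p : nat) (h : R) (m : nat) (x : R) : R :=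
  sum_f_R0 (fun j => kernel p (- PI + INR j * h) x) m.

Lemma kernel_mean_trig_rational f p h m : 0 < h < PI -> INR m * h = 2 * PI ->
  trig_rational (fun x => kernel_numer f p h m x / kernel_denom p h m x).
Proof.
  intros Hh Hmh.
  destruct (trig_span_poly (kernel_numer f p h m)) as [m1 H1];
    [apply trig_sum; intros; apply kernel_trig|].
  destruct (trig_span_poly (kernel_denom p h m)) as [m2 H2].
  { apply (trig_ext _ _ (trig_sum (fun _ => 1) (fun j => kernel p (- PI + INR j * h)) m
                          (fun j => kernel_trig p _))).
    intros x. apply sum_eq. intros; ring. }
  exists m1, m2, (kernel_numer f p h m), (kernel_denom p h m). repeat split; auto.
  intros x Hx. pose proof (kernel_sum_lower_bound p m h x ltac:(lra) Hmh Hx).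
  assert (0 < ((1 + cos h) / 2) ^ p); [|unfold kernel_denom; lra].
  apply pow_lt. pose proof PI_RGT_0.
  assert (cos PI < cos h) by (apply cos_decreasing_1; lra). rewrite cos_PI in *. lra.
Qed.

Lemma kernel_mean_error f M dl e p h m x : 0 <= e -> 0 < h < PI -> INR m * h = 2 * PI ->
  (forall y, inI y -> Rabs (f y) <= M) ->
  (forall x t, inI x -> inI t -> cos dl < cos (x - t) -> Rabs (f t - f x) < e) ->
  inI x ->
  Rabs (kernel_numer f p h m x / kernel_denom p h m x - f x)
  <= e + INR (S m) * (2 * M * ((1 + cos dl) / 2) ^ p) / ((1 + cos h) / 2) ^ p.
Proof.
  intros He Hh Hmh HM U Hx. pose proof PI_RGT_0.
  assert (HM0 : 0 <= M) by (pose proof (HM x Hx); pose proof (Rabs_pos (f x)); lra).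
  apply (weighted_mean_error (fun j => f (- PI + INR j * h))
           (fun j => kernel p (- PI + INR j * h) x)).
  - apply pow_lt. assert (cos PI < cos h) by (apply cos_decreasing_1; lra).
    rewrite cos_PI in *. lra.
  - assert (0 <= ((1 + cos dl) / 2) ^ p) by (apply pow_le; pose proof (COS_bound dl); lra). nra.
  - intros; apply kernel_nonneg.
  - apply kernel_sum_lower_bound; auto; lra.
  - intros j Hj. assert (Ht : inI (- PI + INR j * h)) by (apply nodes_inI with m; auto; lra).
    apply (kernel_deviation f M dl); auto.
Qed.

Lemma kernel_parameters M dl eps : 0 <= M -> 0 < dl < PI -> 0 < eps ->
  exists m h p, 0 < h < PI /\ INR m * h = 2 * PI /\
    INR (S m) * (2 * M * ((1 + cos dl) / 2) ^ p) / ((1 + cos h) / 2) ^ p < eps.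
Proof.
  intros HM0 Hdl He. pose proof PI_RGT_0.
  destruct (INR_unbounded (2*PI/dl)) as [m Hm].
  assert (Hm0 : 0 < INR m) by (apply Rlt_trans with (2*PI/dl); auto; apply Rdiv_lt_0_compat; lra).
  set (h := 2*PI / INR m).
  assert (Hmh : INR m * h = 2 * PI) by (unfold h; field; lra).
  assert (Hh : 0 < h < dl).
  { split; [unfold h; apply Rdiv_lt_0_compat; lra|].
    apply (Rmult_lt_reg_l (INR m)); auto. rewrite Hmh.
    unfold Rdiv in Hm. apply (Rmult_lt_compat_r dl) in Hm; [|lra].
    rewrite Rmult_assoc, Rinv_l in Hm; lra. }
  set (A := (1 + cos h)/2). set (B := (1 + cos dl)/2).
  assert (HB : 0 < B)
    by (unfold B; assert (cos PI < cos dl) by (apply cos_decreasing_1; lra); rewrite cos_PI in *; lra).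
  assert (HBA : B < A)
    by (unfold A, B; assert (cos dl < cos h) by (apply cos_decreasing_1; lra); lra).
  set (ratio := eps / (2 * (M + 1) * (INR m + 1))).
  assert (Hratio : 0 < ratio) by (unfold ratio; apply Rdiv_lt_0_compat; [lra|]; nra).
  assert (HBA1 : 0 <= B / A < 1).
  { split; [apply Rdiv_le_0_compat; lra|].
    apply (Rmult_lt_reg_r A); [lra|]. unfold Rdiv. rewrite Rmult_assoc, Rinv_l; lra. }
  destruct (geometric_small (B / A) HBA1 ratio Hratio) as [p Hp].
  unfold Rdiv in Hp. rewrite Rpow_mult_distr, pow_inv in Hp.
  assert (HAp : 0 < A ^ p) by (apply pow_lt; lra).
  exists m, h, p. split; [lra|split; auto]. fold A B.
  apply Rle_lt_trans with ((INR m + 1) * (2 * (M + 1)) * (B ^ p * / A ^ p)).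
  - replace (INR (S m) * (2 * M * B ^ p) / A ^ p)
      with ((INR m + 1) * (2 * M) * (B ^ p * / A ^ p)) by (rewrite S_INR; field; lra).
    apply Rmult_le_compat_r.
    + apply Rmult_le_pos; [apply pow_le; lra|apply Rlt_le, Rinv_0_lt_compat; lra].
    + pose proof (pos_INR m). nra.
  - apply Rlt_le_trans with ((INR m + 1) * (2 * (M + 1)) * ratio).
    + apply Rmult_lt_compat_l; auto. pose proof (pos_INR m); nra.
    + right. unfold ratio. pose proof (pos_INR m). field. lra.
Qed.

Theorem trig_rational_approx f : C2pi f -> forall eps, 0 < eps ->
  exists r, trig_rational r /\ forall x, inI x -> Rabs (r x - f x) < eps.
Proof.
  intros Hf eps He.
  destruct (contI_bounded f (proj1 Hf)) as [M [HM0 HM]].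
  destruct (C2pi_uniform_circle f Hf (eps/2)) as [dl [Hdl U]]; [lra|].
  destruct (kernel_parameters M dl (eps/2) HM0 Hdl ltac:(lra)) as [m [h [p [Hh [Hmh Hsmall]]]]].
  exists (fun x => kernel_numer f p h m x / kernel_denom p h m x).
  split; [apply kernel_mean_trig_rational; auto|].
  intros x Hx. eapply Rle_lt_trans; [apply (kernel_mean_error f M dl (eps/2)); auto; lra|lra].
Qed.

(** * Bernstein approximation on I *)

(* The Bernstein basis on [0, 1]; B_n g(x) is its combination with the values
   of g at the nodes, after the affine change of variable I -> [0, 1]. *)
Definition bernstein_basis (n k : nat) (t : R) : R :=
  Binomial.C n k * t ^ k * (1 - t) ^ (n - k).

Definition bernstein_node (n k : nat) : R := - PI + INR k / INR n * (PI - - PI).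

Lemma bernstein_basis_nonneg n k t : 0 <= t <= 1 -> 0 <= bernstein_basis n k t.
Proof.
  intros Ht. unfold bernstein_basis.
  apply Rmult_le_pos; [apply Rmult_le_pos|]; try (apply pow_le; lra).
  unfold Binomial.C. apply Rmult_le_pos; [apply pos_INR|].
  apply Rlt_le, Rinv_0_lt_compat, Rmult_lt_0_compat; apply INR_fact_lt_0.
Qed.

Lemma binomial_absorb n i : INR (S i) * Binomial.C (S n) (S i) = INR (S n) * Binomial.C n i.
Proof.
  unfold Binomial.C. replace (S n - S i)%nat with (n - i)%nat by reflexivity.
  rewrite !fact_simpl, !mult_INR.
  pose proof (INR_fact_neq_0 i). pose proof (INR_fact_neq_0 (n - i)).
  pose proof (INR_fact_neq_0 n). assert (INR (S i) <> 0) by (apply not_0_INR; lia).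
  field. auto.
Qed.

(* k C(n+1, k) = (n+1) C(n, k-1), summed: the index shift behind the moments. *)
Lemma binomial_absorb_sum (F : nat -> R) n :
  sum_f_R0 (fun k => INR k * Binomial.C (S n) k * F k) (S n) =
  INR (S n) * sum_f_R0 (fun k => Binomial.C n k * F (S k)) n.
Proof.
  rewrite decomp_sum by lia. simpl pred. rewrite scal_sum.
  replace (INR 0 * Binomial.C (S n) 0 * F 0%nat) with 0 by (simpl; ring). rewrite Rplus_0_l.
  apply sum_eq. intros i _. rewrite binomial_absorb. ring.
Qed.

Lemma bernstein_moment0 n t : sum_f_R0 (fun k => bernstein_basis n k t) n = 1.
Proof.
  unfold bernstein_basis. rewrite <- binomial.
  replace (t + (1 - t)) with 1 by ring. apply pow1.
Qed.

Lemma bernstein_moment1 n t : sum_f_R0 (fun k => INR k * bernstein_basis n k t) n = INR n * t.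
Proof.
  destruct n as [|n]; [simpl; unfold bernstein_basis; simpl; ring|].
  unfold bernstein_basis.
  transitivity (sum_f_R0 (fun k => INR k * Binomial.C (S n) k * (t ^ k * (1-t)^(S n - k))) (S n));
    [apply sum_eq; intros; ring|].
  rewrite binomial_absorb_sum.
  replace (INR (S n) * t)
    with (INR (S n) * (t * sum_f_R0 (fun k => bernstein_basis n k t) n))
    by (rewrite bernstein_moment0; ring).
  f_equal. rewrite scal_sum. apply sum_eq. intros i _. unfold bernstein_basis.
  replace (S n - S i)%nat with (n - i)%nat by reflexivity. simpl. ring.
Qed.

Lemma bernstein_moment2 n t :
  sum_f_R0 (fun k => INR k * INR k * bernstein_basis (S n) k t) (S n)
  = INR (S n) * t * (INR n * t + 1).
Proof.
  unfold bernstein_basis.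
  transitivity (sum_f_R0 (fun k => INR k * Binomial.C (S n) k
                                    * (INR k * t ^ k * (1-t)^(S n - k))) (S n));
    [apply sum_eq; intros; ring|].
  rewrite binomial_absorb_sum.
  replace (INR (S n) * t * (INR n * t + 1)) with
    (INR (S n) * (t * sum_f_R0 (fun k => INR k * bernstein_basis n k t
                                          + bernstein_basis n k t) n))
    by (rewrite sum_plus, bernstein_moment0, bernstein_moment1; ring).
  f_equal. rewrite scal_sum. apply sum_eq. intros i _. unfold bernstein_basis.
  replace (S n - S i)%nat with (n - i)%nat by reflexivity. rewrite S_INR. simpl. ring.
Qed.

Lemma bernstein_variance n t :
  sum_f_R0 (fun k => (INR k / INR (S n) - t) ^ 2 * bernstein_basis (S n) k t) (S n)
  = t * (1 - t) / INR (S n).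
Proof.
  assert (Hn : INR (S n) <> 0) by (apply not_0_INR; lia).
  transitivity (sum_f_R0 (fun k =>
      / INR (S n) ^ 2 * (INR k * INR k * bernstein_basis (S n) k t)
      + (- 2 * t / INR (S n)) * (INR k * bernstein_basis (S n) k t)
      + t ^ 2 * bernstein_basis (S n) k t) (S n));
    [apply sum_eq; intros; field; auto|].
  rewrite !sum_plus, !sum_scal_l, bernstein_moment2, bernstein_moment1, bernstein_moment0.
  rewrite S_INR in *. field. auto.
Qed.

Lemma bernstein_as_basis n g x : (n > 0)%nat -> bernstein n g x =
  sum_f_R0 (fun k => g (bernstein_node n k)
                     * bernstein_basis n k ((x - - PI) / (PI - - PI))) n.
Proof.
  intros Hn. pose proof PI_RGT_0. unfold bernstein. apply sum_eq. intros k Hk.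
  unfold bernstein_basis, bernstein_node.
  set (L := PI - - PI). assert (L <> 0) by (unfold L; lra).
  replace (1 - (x - - PI) / L) with ((PI - x) / L) by (unfold L; field; lra).
  unfold Rdiv. rewrite !Rpow_mult_distr, <- !pow_inv.
  replace ((/ L) ^ n) with ((/L)^k * (/L)^(n-k)) by (rewrite <- pow_add; f_equal; lia).
  ring.
Qed.

Lemma bernstein_node_inI n k : (n > 0)%nat -> (k <= n)%nat -> inI (bernstein_node n k).
Proof.
  intros Hn Hk. pose proof PI_RGT_0. unfold inI, bernstein_node.
  assert (0 <= INR k / INR n <= 1).
  { assert (0 < INR n) by (apply lt_0_INR; lia). apply le_INR in Hk. split.
    - apply Rmult_le_pos; [apply pos_INR|apply Rlt_le, Rinv_0_lt_compat; auto].
    - apply (Rmult_le_reg_r (INR n)); auto. unfold Rdiv. rewrite Rmult_assoc, Rinv_l; lra. }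
  split; nra.
Qed.

(* B_n interpolates at both ends of I: only the extreme basis function
   survives there. *)
Lemma bernstein_left n g : (n > 0)%nat -> bernstein n g (- PI) = g (- PI).
Proof.
  intros Hn. pose proof PI_RGT_0. rewrite bernstein_as_basis by auto.
  replace ((- PI - - PI) / (PI - - PI)) with 0 by (field; lra).
  assert (Hz : forall i, bernstein_basis n (S i) 0 = 0)
    by (intros; unfold bernstein_basis; simpl; ring).
  pose proof (bernstein_moment0 n 0) as H1. rewrite decomp_sum in H1 |- * by lia.
  rewrite sum_eq_R0 in H1 by (intros; apply Hz).
  rewrite sum_eq_R0 by (intros; rewrite Hz; ring).
  unfold bernstein_node.
  replace (- PI + INR 0 / INR n * (PI - - PI)) with (- PI)
    by (simpl; field; apply not_0_INR; lia).
  rewrite Rplus_0_r in *. rewrite H1; ring.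
Qed.

Lemma bernstein_right n g : (n > 0)%nat -> bernstein n g PI = g PI.
Proof.
  intros Hn. pose proof PI_RGT_0. rewrite bernstein_as_basis by auto.
  replace ((PI - - PI) / (PI - - PI)) with 1 by (field; lra).
  destruct n as [|n]; [lia|].
  assert (Hz : forall i, (i <= n)%nat -> bernstein_basis (S n) i 1 = 0).
  { intros i Hi. unfold bernstein_basis. replace (S n - i)%nat with (S (n - i)) by lia.
    simpl. ring. }
  pose proof (bernstein_moment0 (S n) 1) as H1. rewrite tech5 in H1 |- *.
  rewrite sum_eq_R0 in H1 by (intros; apply Hz; auto).
  rewrite sum_eq_R0 by (intros; rewrite Hz; auto; ring).
  unfold bernstein_node.
  replace (- PI + INR (S n) / INR (S n) * (PI - - PI)) with PI
    by (field; apply not_0_INR; lia).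
  rewrite Rplus_0_l in *. rewrite H1; ring.
Qed.

Lemma continuity_sum (F : nat -> R -> R) m : (forall k, continuity (F k)) ->
  continuity (fun x => sum_f_R0 (fun k => F k x) m).
Proof. intros H. induction m as [|m IH]; simpl; [apply H|apply continuity_plus; auto]. Qed.

Lemma bernstein_continuous n g : continuity (bernstein n g).
Proof.
  assert (Hcst : forall c, continuity (fun _ : R => c))
    by (intros; apply continuity_const; intros ? ?; auto).
  assert (Hid : continuity id) by apply derivable_continuous, derivable_id.
  assert (Hpow : forall h k, continuity h -> continuity (fun x => h x ^ k))
    by (intros; apply (continuity_comp h (fun y => y ^ k)); auto;
        apply derivable_continuous, derivable_pow).
  unfold bernstein. apply continuity_sum. intros k.
  repeat apply continuity_mult; auto.
  - apply Hpow. apply (continuity_minus id); auto.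
  - apply Hpow. apply (continuity_minus _ id); auto.
Qed.

(* A bounded, uniformly continuous g satisfies
   |g y - g x| <= e + 2 M (y - x)^2 / d^2: small distances are handled by
   the modulus, large ones by the bound. *)
Lemma contI_quadratic_modulus g M e d : 0 < d ->
  (forall x, inI x -> Rabs (g x) <= M) ->
  (forall x y, inI x -> inI y -> Rabs (x - y) < d -> Rabs (g x - g y) < e) ->
  forall x y, inI x -> inI y -> Rabs (g y - g x) <= e + 2 * M / d ^ 2 * (y - x) ^ 2.
Proof.
  intros Hd HM U x y Hx Hy.
  assert (Hd2 : 0 < d ^ 2) by (apply pow_lt; lra).
  assert (HM0 : 0 <= M) by (pose proof (HM x Hx); pose proof (Rabs_pos (g x)); lra).
  assert (Hquad : 0 <= 2 * M / d ^ 2 * (y - x) ^ 2)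
    by (apply Rmult_le_pos; [apply Rdiv_le_0_compat|apply pow2_ge_0]; lra).
  destruct (Rlt_le_dec (Rabs (y - x)) d) as [Hl|Hl].
  - pose proof (U y x Hy Hx Hl). lra.
  - assert (HyxD : d ^ 2 <= (y - x) ^ 2).
    { rewrite <- (pow2_abs (y - x)). apply pow_incr. lra. }
    assert (2 * M <= 2 * M / d ^ 2 * (y - x) ^ 2).
    { apply (Rmult_le_reg_r (d ^ 2)); auto.
      replace (2 * M / d ^ 2 * (y - x) ^ 2 * d ^ 2) with (2 * M * (y - x) ^ 2) by (field; lra).
      apply Rmult_le_compat_l; lra. }
    assert (e >= 0 \/ e < 0) as [He|He] by lra.
    + pose proof (HM x Hx). pose proof (HM y Hy). assert (Rabs (g y - g x) <= 2 * M)
        by (destruct_minmax; lra). lra.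
    + exfalso. pose proof (U x x Hx Hx ltac:(rewrite Rminus_diag, Rabs_R0; lra)).
      pose proof (Rabs_pos (g x - g x)). lra.
Qed.

Lemma bernstein_error g M e d n x : 0 < d ->
  (forall x, inI x -> Rabs (g x) <= M) ->
  (forall x y, inI x -> inI y -> Rabs (x - y) < d -> Rabs (g x - g y) < e) ->
  inI x -> Rabs (bernstein (S n) g x - g x) <= e + 2 * M * PI ^ 2 / (d ^ 2 * INR (S n)).
Proof.
  intros Hd HM U Hx. pose proof PI_RGT_0.
  assert (HM0 : 0 <= M) by (pose proof (HM x Hx); pose proof (Rabs_pos (g x)); lra).
  assert (Hd2 : 0 < d ^ 2) by (apply pow_lt; lra).
  assert (Hn : 0 < INR (S n)) by (apply lt_0_INR; lia).
  set (t := (x - - PI) / (PI - - PI)).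
  assert (Ht : 0 <= t <= 1).
  { unfold t, inI in *. split; [apply Rdiv_le_0_compat; lra|].
    apply (Rmult_le_reg_r (PI - - PI)); [lra|]. unfold Rdiv. rewrite Rmult_assoc, Rinv_l; lra. }
  set (b := fun k => bernstein_basis (S n) k t).
  assert (Hb : forall k, 0 <= b k) by (intros; apply bernstein_basis_nonneg; auto).
  assert (Hmean : bernstein (S n) g x - g x
                  = sum_f_R0 (fun k => (g (bernstein_node (S n) k) - g x) * b k) (S n)).
  { rewrite bernstein_as_basis by lia. fold t.
    rewrite <- (Rmult_1_r (g x)) at 1.
    rewrite <- (bernstein_moment0 (S n) t), <- sum_scal_l, <- minus_sum.
    apply sum_eq; intros; unfold b; ring. }
  set (C := 2 * M / d ^ 2 * (PI - - PI) ^ 2).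
  assert (Hterm : forall k, (k <= S n)%nat -> Rabs ((g (bernstein_node (S n) k) - g x) * b k)
            <= e * b k + C * ((INR k / INR (S n) - t) ^ 2 * b k)).
  { intros k Hk. rewrite Rabs_mult, (Rabs_pos_eq (b k)) by auto.
    assert (Hnode : bernstein_node (S n) k - x = (PI - - PI) * (INR k / INR (S n) - t))
      by (unfold bernstein_node, t; field; lra).
    pose proof (contI_quadratic_modulus g M e d Hd HM U x (bernstein_node (S n) k) Hx
                  (bernstein_node_inI (S n) k ltac:(lia) Hk)) as Hmod.
    rewrite Hnode in Hmod. apply (Rmult_le_compat_r (b k)) in Hmod; auto.
    unfold C. nra. }
  rewrite Hmean.
  eapply Rle_trans; [apply sum_f_R0_triangle|].
  eapply Rle_trans; [apply sum_Rle; exact Hterm|].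
  rewrite sum_plus, !sum_scal_l. unfold b. rewrite bernstein_moment0, bernstein_variance.
  assert (Htt : t * (1 - t) <= 1/4) by (pose proof (pow2_ge_0 (t - 1/2)); nra).
  replace (2 * M * PI ^ 2 / (d ^ 2 * INR (S n))) with (C * (1/4 / INR (S n)))
    by (unfold C; field; lra).
  apply Rplus_le_compat; [lra|]. apply Rmult_le_compat_l; [unfold C; apply Rmult_le_pos;
    [apply Rdiv_le_0_compat|apply pow2_ge_0]; lra|].
  unfold Rdiv. apply Rmult_le_compat_r; [apply Rlt_le, Rinv_0_lt_compat|]; lra.
Qed.

Theorem bernstein_approx g : contI g -> forall eps, 0 < eps -> exists n, (1 <= n)%nat /\
  forall x, inI x -> Rabs (bernstein n g x - g x) < eps.
Proof.
  intros Hg eps He. pose proof PI_RGT_0.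
  destruct (contI_bounded g Hg) as [M [HM0 HM]].
  destruct (contI_uniform g Hg (eps/2)) as [d [Hd U]]; [lra|].
  assert (Hd2 : 0 < d ^ 2) by (apply pow_lt; lra).
  destruct (INR_unbounded (4 * M * PI ^ 2 / (d ^ 2 * eps))) as [n Hn].
  exists (S n). split; [lia|]. intros x Hx.
  eapply Rle_lt_trans; [apply (bernstein_error g M (eps/2) d n x); auto|].
  (* the variance term is below eps/2 once n > 4 M pi^2 / (d^2 eps) *)
  assert (Hn1 : 0 < INR (S n)) by (apply lt_0_INR; lia).
  assert (2 * M * PI ^ 2 / (d ^ 2 * INR (S n)) < eps / 2); [|lra].
  apply (Rmult_lt_reg_r (d ^ 2 * INR (S n) * 2 / eps)); [apply Rdiv_lt_0_compat; nra|].
  replace (2 * M * PI ^ 2 / (d ^ 2 * INR (S n)) * (d ^ 2 * INR (S n) * 2 / eps))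
    with (4 * M * PI ^ 2 / (d ^ 2 * eps) * d ^ 2) by (field; lra).
  replace (eps / 2 * (d ^ 2 * INR (S n) * 2 / eps)) with (INR (S n) * d ^ 2) by (field; lra).
  apply Rmult_lt_compat_r; auto. rewrite S_INR. lra.
Qed.

(** * Geometry of the partition *)

Section Partition.

Variables (N : nat) (xs : nat -> R).
Hypothesis Hp : partition N xs.

Lemma partition_mono i j : (i <= j <= N)%nat -> xs i <= xs j.
Proof.
  destruct Hp as [_ [_ [_ H]]]. intros [Hij HjN]. induction Hij; [lra|].
  specialize (IHHij ltac:(lia)). specialize (H m ltac:(lia)). lra.
Qed.

Lemma partition_strict i j : (i < j <= N)%nat -> xs i < xs j.
Proof.
  intros [Hij HjN]. pose proof (partition_mono (S i) j ltac:(lia)).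
  destruct Hp as [_ [_ [_ Hs]]]. specialize (Hs i ltac:(lia)). lra.
Qed.

Definition in_piece (i : nat) (y : R) : Prop := xs (pred i) <= y <= xs i.

Lemma piece_inI i y : (1 <= i <= N)%nat -> in_piece i y -> inI y.
Proof.
  intros Hi Hy. pose proof (partition_mono 0 (pred i) ltac:(lia)).
  pose proof (partition_mono i N ltac:(lia)). destruct Hp as [_ [Hx0 [HxN _]]].
  unfold inI, in_piece in *. rewrite Hx0, HxN in *. lra.
Qed.

Lemma Linv_inI i y : (1 <= i <= N)%nat -> in_piece i y -> inI (Linv N xs i y).
Proof.
  intros Hi Hy. pose proof (partition_strict (pred i) i ltac:(lia)).
  destruct Hp as [_ [Hx0 [HxN _]]]. unfold Linv, inI, in_piece in *. rewrite Hx0, HxN in *.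
  pose proof PI_RGT_0.
  assert (0 <= (y - xs (pred i)) / (xs i - xs (pred i)) <= 1).
  { split; [apply Rdiv_le_0_compat; lra|].
    apply (Rmult_le_reg_r (xs i - xs (pred i))); [lra|].
    unfold Rdiv. rewrite Rmult_assoc, Rinv_l; lra. }
  replace (- PI + (PI - - PI) * (y - xs (pred i)) / (xs i - xs (pred i))) with
    (- PI + (2*PI) * ((y - xs (pred i)) / (xs i - xs (pred i)))) by (field; lra).
  nra.
Qed.

Lemma Linv_left i : (1 <= i <= N)%nat -> Linv N xs i (xs (pred i)) = xs 0%nat.
Proof.
  intros Hi. pose proof (partition_strict (pred i) i ltac:(lia)). unfold Linv. field. lra.
Qed.

Lemma Linv_right i : (1 <= i <= N)%nat -> Linv N xs i (xs i) = xs N.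
Proof.
  intros Hi. pose proof (partition_strict (pred i) i ltac:(lia)). unfold Linv. field. lra.
Qed.

Lemma Linv_affine i : (1 <= i <= N)%nat -> exists s, 0 < s /\
  forall y z, Linv N xs i z - Linv N xs i y = s * (z - y).
Proof.
  intros Hi. pose proof (partition_strict (pred i) i ltac:(lia)).
  pose proof (partition_strict 0 N ltac:(destruct Hp; lia)).
  exists ((xs N - xs 0%nat) / (xs i - xs (pred i))).
  split; [apply Rdiv_lt_0_compat; lra|]. intros y z. unfold Linv. field. lra.
Qed.

(* [locate y] is the first index i >= 1 with y <= x_i. *)
Fixpoint locate_from (y : R) (i fuel : nat) : nat :=
  match fuel with
  | O => i
  | S f => if Rle_dec y (xs i) then i else locate_from y (S i) f
  end.

Definition locate (y : R) : nat := locate_from y 1 (N - 1).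

Lemma locate_from_spec y : forall fuel i, (1 <= i)%nat -> (i + fuel = N)%nat -> y <= xs N ->
  (forall j, (1 <= j < i)%nat -> xs j < y) ->
  let k := locate_from y i fuel in
  (i <= k <= N)%nat /\ y <= xs k /\ (forall j, (1 <= j < k)%nat -> xs j < y).
Proof.
  induction fuel as [|f IH]; intros i Hi Hf HyN Hm; simpl.
  - rewrite Nat.add_0_r in Hf. subst N. split; [lia|]. split; auto.
  - destruct (Rle_dec y (xs i)) as [Hle|Hgt]; [split; [lia|auto]|].
    destruct (IH (S i)) as [A1 [A2 A3]]; try lia; auto.
    + intros j Hj. destruct (Nat.eq_dec j i) as [->|]; [lra|apply Hm; lia].
    + split; [lia|auto].
Qed.

Lemma locate_spec y : inI y ->
  let k := locate y in (1 <= k <= N)%nat /\ in_piece k y /\ (forall j, (1 <= j < k)%nat -> xs j < y).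
Proof.
  intros Hy. pose proof Hp as [HN2 [H0 [HN _]]].
  assert (HyN : y <= xs N) by (unfold inI in Hy; rewrite HN; lra).
  destruct (locate_from_spec y (N - 1) 1 ltac:(lia) ltac:(lia) HyN ltac:(intros; lia))
    as [A1 [A2 A3]].
  fold (locate y) in *. split; [lia|]. split; [split|]; auto.
  destruct (Nat.eq_dec (locate y) 1) as [->|Hne].
  - simpl. rewrite H0. unfold inI in Hy. lra.
  - apply Rlt_le, A3. lia.
Qed.

(* Continuity at y is checked from the left and from the right separately;
   at a breakpoint the two sides lie in adjacent pieces. *)
Section Gluing.

Variable F : R -> R.
Hypothesis Hpieces : forall i, (1 <= i <= N)%nat -> forall y, in_piece i y ->
  forall eps, 0 < eps -> exists d, 0 < d /\
    forall z, in_piece i z -> Rabs (z - y) < d -> Rabs (F z - F y) < eps.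

Lemma piece_window i y eps lo hi : (1 <= i <= N)%nat -> in_piece i y -> 0 < eps ->
  xs (pred i) <= lo -> hi <= xs i -> lo <= y <= hi ->
  exists d, 0 < d /\ forall z, lo <= z <= hi -> Rabs (z - y) < d -> Rabs (F z - F y) < eps.
Proof.
  intros Hi Hy He Hlo Hhi Hlh. destruct (Hpieces i Hi y Hy eps He) as [d [Hd Hc]].
  exists d. split; auto. intros z Hz Hzy. apply Hc; auto. unfold in_piece; lra.
Qed.

Lemma glued_left_continuity y eps : inI y -> 0 < eps -> exists d, 0 < d /\
  forall z, inI z -> y - d < z <= y -> Rabs (F z - F y) < eps.
Proof.
  intros Hy He. destruct Hp as [HN2 [Hx0 [HxN _]]].
  destruct (locate_spec y Hy) as [Hk [[Hl Hr] _]]. set (k := locate y) in *.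
  destruct (Rle_lt_or_eq_dec _ _ Hl) as [Hlt|Heq].
  - destruct (piece_window k y eps (xs (pred k)) y Hk (conj Hl Hr) He) as [d [Hd Hc]]; try lra.
    exists (Rmin d (y - xs (pred k))). split; [apply Rmin_pos; lra|].
    intros z Hz Hzy. pose proof (Rmin_l d (y - xs (pred k))). pose proof (Rmin_r d (y - xs (pred k))).
    apply Hc; [lra|apply Rabs_lt_between; lra].
  - destruct (Nat.eq_dec k 1) as [Hk1|Hk1].
    + exists 1. split; [lra|]. intros z Hz Hzy. rewrite Hk1 in Heq. simpl in Heq.
      rewrite Hx0 in Heq. unfold inI in Hz. replace z with y by lra.
      rewrite Rminus_diag, Rabs_R0; lra.
    + pose proof (partition_strict (pred (pred k)) (pred k) ltac:(lia)).
      destruct (piece_window (pred k) y eps (xs (pred (pred k))) y ltac:(lia))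
        as [d [Hd Hc]]; try (unfold in_piece); try lra.
      exists (Rmin d (y - xs (pred (pred k)))). split; [apply Rmin_pos; lra|].
      intros z Hz Hzy. pose proof (Rmin_l d (y - xs (pred (pred k)))).
      pose proof (Rmin_r d (y - xs (pred (pred k)))).
      apply Hc; [lra|apply Rabs_lt_between; lra].
Qed.

Lemma glued_right_continuity y eps : inI y -> 0 < eps -> exists d, 0 < d /\
  forall z, inI z -> y <= z < y + d -> Rabs (F z - F y) < eps.
Proof.
  intros Hy He. destruct Hp as [HN2 [Hx0 [HxN _]]].
  destruct (locate_spec y Hy) as [Hk [[Hl Hr] _]]. set (k := locate y) in *.
  destruct (Rle_lt_or_eq_dec _ _ Hr) as [Hlt|Heq].
  - destruct (piece_window k y eps y (xs k) Hk (conj Hl Hr) He) as [d [Hd Hc]]; try lra.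
    exists (Rmin d (xs k - y)). split; [apply Rmin_pos; lra|].
    intros z Hz Hzy. pose proof (Rmin_l d (xs k - y)). pose proof (Rmin_r d (xs k - y)).
    apply Hc; [lra|apply Rabs_lt_between; lra].
  - destruct (Nat.eq_dec k N) as [HkN|HkN].
    + exists 1. split; [lra|]. intros z Hz Hzy. rewrite HkN, HxN in Heq.
      unfold inI in Hz. replace z with y by lra. rewrite Rminus_diag, Rabs_R0; lra.
    + pose proof (partition_strict k (S k) ltac:(lia)).
      destruct (piece_window (S k) y eps y (xs (S k)) ltac:(lia))
        as [d [Hd Hc]]; try (unfold in_piece; simpl); try lra.
      exists (Rmin d (xs (S k) - y)). split; [apply Rmin_pos; lra|].
      intros z Hz Hzy. pose proof (Rmin_l d (xs (S k) - y)). pose proof (Rmin_r d (xs (S k) - y)).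
      apply Hc; [lra|apply Rabs_lt_between; lra].
Qed.

Lemma contI_glued : contI F.
Proof.
  intros y Hy eps He.
  destruct (glued_left_continuity y eps Hy He) as [dL [HdL HL]].
  destruct (glued_right_continuity y eps Hy He) as [dR [HdR HR]].
  exists (Rmin dL dR). split; [apply Rmin_pos; lra|].
  intros z Hz Hzy. pose proof (Rmin_l dL dR). pose proof (Rmin_r dL dR).
  apply Rabs_lt_between in Hzy.
  destruct (Rle_dec z y); [apply HL|apply HR]; auto; lra.
Qed.

End Gluing.

End Partition.

(** * Uniform limits on I *)

Lemma geometric_small_scaled a C : 0 <= a < 1 -> 0 <= C -> forall e, 0 < e ->
  exists k, C * a ^ k < e.
Proof.
  intros Ha HC e He. destruct (geometric_small a Ha (e / (C + 1))) as [k Hk];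
    [apply Rdiv_lt_0_compat; lra|].
  exists k. assert (0 <= a ^ k) by (apply pow_le; lra).
  apply Rle_lt_trans with ((C + 1) * a ^ k); [nra|].
  apply (Rmult_lt_compat_l (C + 1)) in Hk; [|lra].
  replace ((C + 1) * (e / (C + 1))) with e in Hk by (field; lra). exact Hk.
Qed.

Lemma zero_of_geometric_bound x C a : 0 <= a < 1 -> 0 <= C ->
  (forall k, Rabs x <= C * a ^ k) -> x = 0.
Proof.
  intros Ha HC H. destruct (Req_dec x 0) as [?|Hx]; auto. exfalso.
  destruct (geometric_small_scaled a C Ha HC (Rabs x) (Rabs_pos_lt x Hx)) as [k Hk].
  specialize (H k). lra.
Qed.

Lemma limit_le_bound (u : nat -> R) l v B K : Un_cv u l ->
  (forall k, (K <= k)%nat -> Rabs (u k - v) <= B) -> Rabs (l - v) <= B.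
Proof.
  intros Hu Hb. destruct (Rle_lt_dec (Rabs (l - v)) B) as [?|Hlt]; auto. exfalso.
  destruct (Hu (Rabs (l - v) - B)) as [K2 HK2]; [lra|].
  specialize (HK2 (max K K2) ltac:(lia)). specialize (Hb (max K K2) ltac:(lia)).
  unfold R_dist in HK2. pose proof (Rabs_triang (u (max K K2) - v) (l - u (max K K2))) as Ht.
  replace (u (max K K2) - v + (l - u (max K K2))) with (l - v) in Ht by ring.
  rewrite Rabs_minus_sym in HK2. lra.
Qed.

Lemma uniform_geometric_limit (u : nat -> R -> R) C a : 0 <= a < 1 -> 0 <= C ->
  (forall k m y, inI y -> Rabs (u (k + m)%nat y - u k y) <= C * a ^ k) ->
  exists E, forall k y, inI y -> Rabs (u k y - E y) <= C * a ^ k.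
Proof.
  intros Ha HC Hcau.
  assert (Hcr : forall y, Cauchy_crit (fun k => u k (clamp y))).
  { intros y e He. destruct (geometric_small_scaled a C Ha HC (e / 2)) as [K HK]; [lra|].
    exists K. intros n m Hn Hm. unfold R_dist.
    pose proof (Hcau K (n - K)%nat (clamp y) (clamp_inI y)).
    pose proof (Hcau K (m - K)%nat (clamp y) (clamp_inI y)).
    replace (K + (n - K))%nat with n in * by lia. replace (K + (m - K))%nat with m in * by lia.
    replace (u n (clamp y) - u m (clamp y))
      with ((u n (clamp y) - u K (clamp y)) - (u m (clamp y) - u K (clamp y))) by ring.
    eapply Rle_lt_trans; [apply Rabs_triang|]. rewrite Rabs_Ropp. lra. }
  exists (fun y => proj1_sig (R_complete _ (Hcr y))).
  intros k y Hy. rewrite Rabs_minus_sym.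
  apply (limit_le_bound _ _ _ _ k (proj2_sig (R_complete _ (Hcr y)))).
  intros m Hm. rewrite clamp_id by auto. replace m with (k + (m - k))%nat by lia. auto.
Qed.

Lemma contI_uniform_limit (u : nat -> R -> R) (E : R -> R) (b : nat -> R) :
  (forall k, contI (u k)) -> (forall k y, inI y -> Rabs (u k y - E y) <= b k) ->
  (forall e, 0 < e -> exists k, b k < e) -> contI E.
Proof.
  intros Hu HuE Hb y Hy e He.
  destruct (Hb (e / 3)) as [k Hk]; [lra|].
  destruct (Hu k y Hy (e / 3)) as [d [Hd Hdd]]; [lra|].
  exists d. split; auto. intros z Hz Hzy.
  specialize (Hdd z Hz Hzy). pose proof (HuE k z Hz). pose proof (HuE k y Hy).
  replace (E z - E y) with (-(u k z - E z) + (u k z - u k y) + (u k y - E y)) by ring.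
  pose proof (Rabs_triang (-(u k z - E z) + (u k z - u k y)) (u k y - E y)).
  pose proof (Rabs_triang (-(u k z - E z)) (u k z - u k y)). rewrite Rabs_Ropp in *. lra.
Qed.

(** * The fractal perturbation equation *)

(* For D vanishing at the ends of I we solve
     E = alpha_i (E + D) o L_i^{-1}   on I_i,  i = 1..N,
   whose solution E turns r into the fractal function r + E = r^alpha_{Delta,b}
   when D = r - b.  The right-hand side defines an operator on functions
   vanishing at the ends of I, contracting by any a < 1 bounding the |alpha_i|. *)
Section FractalEquation.

Variables (N : nat) (xs alpha : nat -> R) (D : R -> R) (a : R).
Hypothesis Hp : partition N xs.
Hypothesis Ha : 0 <= a < 1.
Hypothesis Halpha : forall i, (1 <= i <= N)%nat -> Rabs (alpha i) <= a.
Hypothesis HD0 : D (xs 0%nat) = 0.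
Hypothesis HDN : D (xs N) = 0.

Definition vanishes_at_ends (e : R -> R) : Prop := e (xs 0%nat) = 0 /\ e (xs N) = 0.

(* The operator, evaluated on the first piece containing y. *)
Definition fractal_step (e : R -> R) (y : R) : R :=
  let i := locate N xs y in alpha i * (e (Linv N xs i y) + D (Linv N xs i y)).

(* At a breakpoint both adjacent pieces give the value 0, so the operator
   agrees with the defining formula on every closed piece. *)
Lemma fractal_step_on_piece e : vanishes_at_ends e ->
  forall i, (1 <= i <= N)%nat -> forall y, in_piece xs i y ->
  fractal_step e y = alpha i * (e (Linv N xs i y) + D (Linv N xs i y)).
Proof.
  intros [E0 EN] i Hi y Hy.
  destruct (locate_spec N xs Hp y (piece_inI N xs Hp i y Hi Hy)) as [Hk [[Hl Hr] Hmin]].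
  unfold fractal_step. set (k := locate N xs y) in *.
  assert (Hki : (k <= i)%nat).
  { destruct (Nat.le_gt_cases k i) as [?|Hlt]; auto. exfalso.
    specialize (Hmin i ltac:(lia)). unfold in_piece in Hy. lra. }
  destruct (Nat.eq_dec k i) as [->|Hne]; auto.
  pose proof (partition_mono N xs Hp k (pred i) ltac:(lia)). unfold in_piece in Hy.
  assert (Hyk : y = xs k) by lra. assert (Hyi : y = xs (pred i)) by lra.
  rewrite Hyk at 1 2. rewrite (Linv_right N xs Hp k) by lia. rewrite EN, HDN.
  rewrite Hyi, (Linv_left N xs Hp i) by auto. rewrite E0, HD0. ring.
Qed.

Lemma fractal_step_ends e : vanishes_at_ends e -> vanishes_at_ends (fractal_step e).
Proof.
  intros He. pose proof He as [E0 EN]. pose proof Hp as [HN2 _].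
  split.
  - rewrite (fractal_step_on_piece e He 1 ltac:(lia) (xs 0%nat))
      by (unfold in_piece; simpl; pose proof (partition_mono N xs Hp 0 1 ltac:(lia)); lra).
    pose proof (Linv_left N xs Hp 1 ltac:(lia)) as HL; simpl in HL.
    rewrite HL, E0, HD0; ring.
  - rewrite (fractal_step_on_piece e He N ltac:(lia) (xs N))
      by (unfold in_piece; pose proof (partition_mono N xs Hp (pred N) N ltac:(lia)); lra).
    rewrite (Linv_right N xs Hp N) by lia. rewrite EN, HDN; ring.
Qed.

(* On each piece the operator composes e + D with an affine map, so it
   preserves continuity piecewise, hence on I by gluing. *)
Lemma fractal_step_contI e : contI D -> contI e -> vanishes_at_ends e ->
  contI (fractal_step e).
Proof.
  intros HDc Hec Hends. apply (contI_glued N xs Hp). intros i Hi y Hy eps He.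
  destruct (Linv_affine N xs Hp i Hi) as [s [Hs Haff]].
  destruct (contI_scal (alpha i) _ (contI_plus e D Hec HDc) (Linv N xs i y)
              (Linv_inI N xs Hp i y Hi Hy) eps He) as [d [Hd Hdd]].
  exists (d / s). split; [apply Rdiv_lt_0_compat; lra|]. intros z Hz Hzy.
  rewrite !(fractal_step_on_piece e Hends i Hi) by auto.
  apply Hdd; [apply Linv_inI; auto|]. rewrite Haff, Rabs_mult, Rabs_pos_eq by lra.
  apply (Rmult_lt_compat_l s) in Hzy; auto.
  replace (s * (d / s)) with d in Hzy by (field; lra). exact Hzy.
Qed.

Lemma fractal_step_contraction e1 e2 c : vanishes_at_ends e1 -> vanishes_at_ends e2 ->
  (forall z, inI z -> Rabs (e1 z - e2 z) <= c) ->
  forall y, inI y -> Rabs (fractal_step e1 y - fractal_step e2 y) <= a * c.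
Proof.
  intros H1 H2 Hc y Hy. destruct (locate_spec N xs Hp y Hy) as [Hk [Hpc _]].
  set (i := locate N xs y) in *.
  rewrite (fractal_step_on_piece e1 H1 i Hk y Hpc), (fractal_step_on_piece e2 H2 i Hk y Hpc).
  set (z := Linv N xs i y).
  replace (alpha i * (e1 z + D z) - alpha i * (e2 z + D z)) with (alpha i * (e1 z - e2 z)) by ring.
  rewrite Rabs_mult. apply Rmult_le_compat; auto using Rabs_pos.
  apply Hc, Linv_inI; auto.
Qed.

Fixpoint fractal_iterate (k : nat) : R -> R :=
  match k with
  | O => fun _ => 0
  | S k => fractal_step (fractal_iterate k)
  end.

Lemma iterate_ends k : vanishes_at_ends (fractal_iterate k).
Proof.
  induction k as [|k IH]; [split; reflexivity|]. apply fractal_step_ends, IH.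
Qed.

Lemma iterate_contI k : contI D -> contI (fractal_iterate k).
Proof.
  intros HDc. induction k as [|k IH].
  - intros y _ e He. exists 1. split; [lra|]. intros; simpl. rewrite Rminus_diag, Rabs_R0; lra.
  - apply fractal_step_contI; auto using iterate_ends.
Qed.

Section Bounded.

Variable eta : R.
Hypothesis HDb : forall y, inI y -> Rabs (D y) <= eta.

Lemma iterate_increment k y : inI y ->
  Rabs (fractal_iterate (S k) y - fractal_iterate k y) <= a ^ k * (a * eta).
Proof.
  revert y. induction k as [|k IH]; intros y Hy.
  - destruct (locate_spec N xs Hp y Hy) as [Hi [Hpc _]].
    change (Rabs (fractal_step (fractal_iterate 0) y - 0) <= 1 * (a * eta)).
    rewrite (fractal_step_on_piece _ (iterate_ends 0) _ Hi y Hpc).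
    simpl. rewrite Rminus_0_r, Rplus_0_l, Rmult_1_l, Rabs_mult.
    apply Rmult_le_compat; auto using Rabs_pos. apply HDb, Linv_inI; auto.
  - change (Rabs (fractal_step (fractal_iterate (S k)) y - fractal_step (fractal_iterate k) y)
            <= a ^ S k * (a * eta)).
    replace (a ^ S k * (a * eta)) with (a * (a ^ k * (a * eta))) by (simpl; ring).
    apply fractal_step_contraction; auto using iterate_ends.
Qed.

Lemma iterate_cauchy k m y : inI y ->
  Rabs (fractal_iterate (k + m) y - fractal_iterate k y) <= a * eta / (1 - a) * a ^ k.
Proof.
  intros Hy.
  assert (Heta : 0 <= eta) by (pose proof (HDb y Hy); pose proof (Rabs_pos (D y)); lra).
  assert (Htel : Rabs (fractal_iterate (k + m) y - fractal_iterate k y)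
                 <= a * eta * (a ^ k - a ^ (k + m)) / (1 - a)).
  { induction m as [|m IH].
    - rewrite Nat.add_0_r, !Rminus_diag, Rabs_R0. unfold Rdiv. lra.
    - replace (fractal_iterate (k + S m) y - fractal_iterate k y) with
        ((fractal_iterate (S (k + m)) y - fractal_iterate (k + m) y)
         + (fractal_iterate (k + m) y - fractal_iterate k y)) by (rewrite Nat.add_succ_r; ring).
      eapply Rle_trans; [apply Rabs_triang|].
      pose proof (iterate_increment (k + m) y Hy).
      replace (a * eta * (a ^ k - a ^ (k + S m)) / (1 - a)) with
        (a ^ (k + m) * (a * eta) + a * eta * (a ^ k - a ^ (k + m)) / (1 - a))
        by (rewrite Nat.add_succ_r; simpl; field; lra).
      lra. }
  eapply Rle_trans; [exact Htel|].
  replace (a * eta / (1 - a) * a ^ k) with (a * eta * a ^ k / (1 - a)) by (field; lra).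
  apply Rmult_le_compat_r; [apply Rlt_le, Rinv_0_lt_compat; lra|].
  apply Rmult_le_compat_l; [apply Rmult_le_pos; lra|].
  pose proof (pow_le a (k + m) (proj1 Ha)). lra.
Qed.

Theorem fractal_perturbation : contI D ->
  exists E, contI E /\ (forall y, inI y -> Rabs (E y) <= a * eta / (1 - a)) /\
    forall i, (1 <= i <= N)%nat -> forall y, in_piece xs i y ->
      E y = alpha i * (E (Linv N xs i y) + D (Linv N xs i y)).
Proof.
  intros HDc. pose proof PI_RGT_0.
  assert (Heta : 0 <= eta)
    by (pose proof (HDb 0 ltac:(unfold inI; lra)); pose proof (Rabs_pos (D 0)); lra).
  set (C := a * eta / (1 - a)).
  assert (HC : 0 <= C) by (apply Rdiv_le_0_compat; [apply Rmult_le_pos|]; lra).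
  destruct (uniform_geometric_limit fractal_iterate C a Ha HC iterate_cauchy) as [E HE].
  exists E. split; [|split].
  - apply (contI_uniform_limit fractal_iterate E (fun k => C * a ^ k)); auto.
    + intros k. apply iterate_contI; auto.
    + apply geometric_small_scaled; auto.
  - intros y Hy. specialize (HE 0%nat y Hy). simpl in HE.
    rewrite Rminus_0_l, Rabs_Ropp, Rmult_1_r in HE. exact HE.
  - intros i Hi y Hy. apply Rminus_diag_uniq.
    assert (HLy := Linv_inI N xs Hp i y Hi Hy). set (z := Linv N xs i y) in *.
    apply (zero_of_geometric_bound _ (2 * C) a Ha ltac:(lra)). intros k.
    (* E y - alpha_i (E z + D z) is the defect of the (k+1)-st iterate *)
    assert (Hstep : fractal_iterate (S k) y = alpha i * (fractal_iterate k z + D z))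
      by (apply fractal_step_on_piece; auto using iterate_ends).
    replace (E y - alpha i * (E z + D z)) with
      (-(fractal_iterate (S k) y - E y) + alpha i * (fractal_iterate k z - E z))
      by (rewrite Hstep; ring).
    eapply Rle_trans; [apply Rabs_triang|]. rewrite Rabs_Ropp, Rabs_mult.
    pose proof (HE (S k) y (piece_inI N xs Hp i y Hi Hy)). pose proof (HE k z HLy).
    assert (Rabs (alpha i) * Rabs (fractal_iterate k z - E z) <= 1 * (C * a ^ k))
      by (apply Rmult_le_compat; auto using Rabs_pos; specialize (Halpha i Hi); lra).
    assert (C * a ^ S k <= C * a ^ k)
      by (apply Rmult_le_compat_l; auto; simpl; pose proof (pow_le a k (proj1 Ha)); nra).
    lra.
Qed.

End Bounded.

End FractalEquation.

(** * Density of the fractal rational functions *)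

Lemma scale_vector_bound N alpha : scale_vector N alpha -> exists a, 0 <= a < 1 /\
  forall i, (1 <= i <= N)%nat -> Rabs (alpha i) <= a.
Proof.
  induction N as [|N IH]; intros Hs; [exists 0; split; [lra|intros; lia]|].
  destruct IH as [a [Ha H]]; [intros i Hi; apply Hs; lia|].
  exists (Rmax a (Rabs (alpha (S N)))). split.
  - split; [apply Rle_trans with a; [lra|apply Rmax_l]|].
    apply Rmax_lub_lt; [lra|]. specialize (Hs (S N) ltac:(lia)). destruct_minmax; lra.
  - intros i Hi. destruct (Nat.eq_dec i (S N)) as [->|]; [apply Rmax_r|].
    apply Rle_trans with a; [apply H; lia|apply Rmax_l].
Qed.

Definition bernstein_defect (n : nat) (r : R -> R) (y : R) : R := r y - bernstein n r y.

Lemma bernstein_defect_small r : contI r -> forall eta, 0 < eta -> exists n, (1 <= n)%nat /\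
  contI (bernstein_defect n r) /\ bernstein_defect n r (- PI) = 0 /\
  bernstein_defect n r PI = 0 /\ forall y, inI y -> Rabs (bernstein_defect n r y) <= eta.
Proof.
  intros Hrc eta Heta. destruct (bernstein_approx r Hrc eta Heta) as [n [Hn Hb]].
  exists n. unfold bernstein_defect. repeat split; auto.
  - apply contI_minus; auto. apply continuity_pt_contI; intros; apply bernstein_continuous.
  - rewrite bernstein_left by lia. ring.
  - rewrite bernstein_right by lia. ring.
  - intros y Hy. rewrite Rabs_minus_sym. apply Rlt_le; auto.
Qed.

Lemma perturbation_is_fractal N xs alpha r b E : contI r -> contI E ->
  (forall i, (1 <= i <= N)%nat -> forall y, in_piece xs i y ->
     E y = alpha i * (E (Linv N xs i y) + (r (Linv N xs i y) - b (Linv N xs i y)))) ->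
  is_fractal N xs alpha r b (fun y => r y + E y).
Proof.
  intros Hr HE Heq. split; [apply contI_plus; auto|].
  intros i Hi y Hy. rewrite (Heq i Hi y Hy). ring.
Qed.

Theorem mainTheorem3 :
  forall (N : nat) (xs alpha : nat -> R),
    partition N xs -> scale_vector N alpha ->
    forall f : R -> R, C2pi f ->
    forall eps : R, 0 < eps ->
      exists (n : nat) (h : R -> R),
        (1 <= n)%nat /\ in_fractal_rational N xs alpha n h /\
        forall x, inI x -> Rabs (h x - f x) < eps.
Proof.
  intros N xs alpha Hp Hs f Hf eps He.
  destruct (scale_vector_bound N alpha Hs) as [a [Ha Hal]].
  destruct (trig_rational_approx f Hf (eps/2)) as [r [Htr Hr]]; [lra|].
  set (eta := eps * (1 - a) / 4).
  assert (Heta : 0 < eta) by (unfold eta; apply Rdiv_lt_0_compat; [apply Rmult_lt_0_compat|]; lra).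
  destruct (bernstein_defect_small r (trig_rational_contI r Htr) eta Heta)
    as [n [Hn [HDc [HD0 [HDN HDb]]]]].
  pose proof Hp as [_ [Hx0 [HxN _]]]. rewrite <- Hx0 in HD0. rewrite <- HxN in HDN.
  destruct (fractal_perturbation N xs alpha _ a Hp Ha Hal HD0 HDN eta HDb HDc)
    as [E [HEc [HEb HEq]]].
  exists n, (fun y => r y + E y). split; [auto|split].
  - exists r. split; auto. apply perturbation_is_fractal; auto. apply trig_rational_contI; auto.
  - (* |r + E - f| <= eps/2 + a eta / (1 - a) = eps/2 + a eps / 4 < eps *)
    intros x Hx. specialize (Hr x Hx). specialize (HEb x Hx).
    assert (a * eta / (1 - a) <= eps / 4)
      by (unfold eta; replace (a * (eps * (1 - a) / 4) / (1 - a)) with (a * (eps / 4))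
            by (field; lra); nra).
    replace (r x + E x - f x) with ((r x - f x) + E x) by ring.
    pose proof (Rabs_triang (r x - f x) (E x)). lra.
Qed.
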